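(* There is no $e\in\mathsf{KAT}(\{x_1,x_2\},\emptyset)$ such that $O_e(L_1,L_2)=L_1\cap L_2$ for all finite $\Sigma,T$ and all $L_1,L_2\in\mathcal{G}(\Sigma,T)$.
   Context: For finite $T$, $\Sigma$: $\mathsf{BA}(T)$ Boolean expressions over $T$; $\mathsf{KAT}(\Sigma,T)$: $e::=b\in\mathsf{BA}(T)\mid p\in\Sigma\mid e+f\mid e\cdot f\mid e^*$. Atoms $\mathsf{At}_T=2^T$, $\alpha\le b$ meaning $b$ holds under the assignment making exactly the tests in $\alpha$ true. Guarded strings: words in $\mathsf{At}_T(\Sigma\mathsf{At}_T)^*$. $w'\alpha\diamond\alpha x'=w'\alpha x'$; $L\diamond K=\{w\diamond x:w\in L,x\in K,\text{defined}\}$; $L^{(0)}=\mathsf{At}_T$, $L^{(n+1)}=L\diamond L^{(n)}$, $L^{( * )}=\bigcup_nL^{(n)}$. $L(b)=\{\alpha:\alpha\le b\}$, $L(p)=\{\alpha p\beta\}$, $L(e+f)=L(e)\cup L(f)$, $L(ef)=L(e)\diamond L(f)$, $L(e^* )=L(e)^{( * )}$. $\mathcal{G}(\Sigma,T)$: guarded languages regular over alphabet $\mathsf{At}_T\cup\Sigma$. Substitution: for $\mathfrak{s}:\Sigma_0\to\mathcal{G}(\Sigma_1,T_1)$, $\mathfrak{t}:T_0\to\mathsf{BA}(T_1)$: $\beta\in\mathsf{At}_{T_1}$ is $\mathfrak{t}$-consistent with $\alpha\in\mathsf{At}_{T_0}$ if $\alpha\le t\iff\beta\le\mathfrak{t}(t)$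 for all $t\in T_0$; $\mathrm{apply}_{\mathfrak{t}}(L)=\{\beta_0p_0\cdots p_{n-1}\beta_n:\exists\alpha_0p_0\cdots p_{n-1}\alpha_n\in L,\ \beta_i\ \mathfrak{t}\text{-consistent with }\alpha_i\}$; $\mathrm{apply}^{\mathfrak{s}}(L)=\{\alpha_0\diamond w_0\diamond\alpha_1\diamond\cdots\diamond w_{n-1}\diamond\alpha_n:\alpha_0p_0\cdots p_{n-1}\alpha_n\in L,\ w_i\in\mathfrak{s}(p_i)\}$; $\mathrm{apply}^{\mathfrak{s}}_{\mathfrak{t}}=\mathrm{apply}^{\mathfrak{s}}\circ\mathrm{apply}_{\mathfrak{t}}$. For $e\in\mathsf{KAT}(\{x_1,\dots,x_n\},\{y_1,\dots,y_m\})$, the regular operation $O_e$ takes (for any finite $\Sigma,T$) $L_1,\dots,L_n\in\mathcal{G}(\Sigma,T)$ and $b_1,\dots,b_m\in\mathsf{BA}(T)$ and returns $\mathrm{apply}^{\mathfrak{s}}_{\mathfrak{t}}(L(e))$ where $\mathfrak{s}(x_i)=L_i$, $\mathfrak{t}(y_i)=b_i$. Here $m=0$, so $O_e(L_1,L_2)=\mathrm{apply}^{\mathfrak{s}}_{\mathfrak{t}}(L(e))$ with $\mathfrak{t}$ the empty map. *)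

From mathcomp Require Import all_boot.
Set Implicit Arguments. Unset Strict Implicit. Unset Printing Implicit Defensive.

Inductive bexp (T : Type) : Type :=
| BTrue | BFalse | BVar of T
| BAnd of bexp T & bexp T | BOr of bexp T & bexp T | BNot of bexp T.
Arguments BTrue {T}. Arguments BFalse {T}.

(* Atoms At_T = 2^T : the set of tests that are true *)
Definition atom (T : finType) := {set T}.

Fixpoint beval (T : finType) (a : atom T) (b : bexp T) : bool :=
  match b with
  | BTrue => true | BFalse => false | BVar t => t \in a
  | BAnd b1 b2 => beval a b1 && beval a b2
  | BOr b1 b2 => beval a b1 || beval a b2
  | BNot b1 => ~~ beval a b1
  end.

Inductive kexp (S T : Type) : Type :=
| KTest of bexp T | KAct of S
| KPlus of kexp S T & kexp S T | KSeq of kexp S T & kexp S T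
| KStar of kexp S T.

(* Guarded strings alpha_0 p_0 alpha_1 ... p_{n-1} alpha_n represented as
   (alpha_0, [:: (p_0, alpha_1); ...; (p_{n-1}, alpha_n)]) *)
Definition gstring (S T : finType) := (atom T * seq (S * atom T))%type.
Definition lang (S T : finType) := gstring S T -> Prop.

Definition gfirst (S T : finType) (w : gstring S T) : atom T := w.1.
Definition glast (S T : finType) (w : gstring S T) : atom T := last w.1 (map snd w.2).

Definition gcat (S T : finType) (L K : lang S T) : lang S T :=
  fun w => exists u v, L u /\ K v /\ glast u = gfirst v /\ w = (u.1, u.2 ++ v.2).

Fixpoint gpow (S T : finType) (L : lang S T) (n : nat) : lang S T :=
  match n with
  | 0 => fun w => w.2 = [::]
  | n'.+1 => gcat L (gpow L n')
  end.

Definition gstar (S T : finType) (L : lang S T) : lang S T :=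
  fun w => exists n, gpow L n w.

Fixpoint kat_lang (S T : finType) (e : kexp S T) : lang S T :=
  match e with
  | KTest b => fun w => w.2 = [::] /\ beval w.1 b
  | KAct p => fun w => exists b, w.2 = [:: (p, b)]
  | KPlus e1 e2 => fun w => kat_lang e1 w \/ kat_lang e2 w
  | KSeq e1 e2 => gcat (kat_lang e1) (kat_lang e2)
  | KStar e1 => gstar (kat_lang e1)
  end.

Definition genc (S T : finType) (w : gstring S T) : seq (atom T + S) :=
  inl w.1 :: flatten (map (fun pb : S * atom T => [:: inr pb.1; inl pb.2]) w.2).

Definition dfa_regular (A : finType) (W : seq A -> Prop) : Prop :=
  exists (Q : finType) (q0 : Q) (F : pred Q) (delta : Q -> A -> Q),
    forall x, W x <-> foldl delta q0 x \in F.

Definition guarded_regular (S T : finType) (L : lang S T) : Prop :=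
  dfa_regular (fun x : seq (atom T + S) => exists w, L w /\ genc w = x).

Definition tconsistent (T0 T1 : finType) (t : T0 -> bexp T1)
  (b : atom T1) (a : atom T0) : Prop :=
  forall y : T0, (y \in a) = beval b (t y).

Fixpoint tconsistent_seq (S T0 T1 : finType) (t : T0 -> bexp T1)
  (s1 : seq (S * atom T1)) (s0 : seq (S * atom T0)) : Prop :=
  match s1, s0 with
  | [::], [::] => True
  | (p1, b) :: s1', (p0, a) :: s0' =>
      p1 = p0 /\ tconsistent t b a /\ tconsistent_seq t s1' s0'
  | _, _ => False
  end.

Definition apply_t (S T0 T1 : finType) (t : T0 -> bexp T1) (L : lang S T0)
  : lang S T1 :=
  fun w => exists v, L v /\ tconsistent t w.1 v.1 /\ tconsistent_seq t w.2 v.2.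

Fixpoint subst_gs (S0 S1 T : finType) (s : S0 -> lang S1 T)
  (a : atom T) (l : seq (S0 * atom T)) (w : gstring S1 T) : Prop :=
  match l with
  | [::] => w = (a, [::])
  | (p, b) :: l' =>
      exists w0 w1, s p w0 /\ gfirst w0 = a /\ glast w0 = b /\
        subst_gs s b l' w1 /\ w = (w0.1, w0.2 ++ w1.2)
  end.

Definition apply_s (S0 S1 T : finType) (s : S0 -> lang S1 T) (L : lang S0 T)
  : lang S1 T :=
  fun w => exists v, L v /\ subst_gs s v.1 v.2 w.

Definition apply_st (S0 S1 T0 T1 : finType) (s : S0 -> lang S1 T1)
  (t : T0 -> bexp T1) (L : lang S0 T0) : lang S1 T1 :=
  apply_s s (apply_t t L).

Definition O_e (n m : nat) (e : kexp 'I_n 'I_m) (S T : finType)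
  (Ls : 'I_n -> lang S T) (bs : 'I_m -> bexp T) : lang S T :=
  apply_st Ls bs (kat_lang e).

(* If O_e computed intersection, then O_e(L(p), L(p)) = L(p) would be
   nonempty, so apply_t(L(e)) contains some guarded string v.  Substituting
   into v languages that contain a string between any two atoms always
   succeeds, and L(p), L(q) are such languages; hence O_e(L(p), L(q)) is
   nonempty as well, although L(p) and L(q) are disjoint for p <> q. *)
From mathcomp Require Import all_boot.
Set Implicit Arguments. Unset Strict Implicit. Unset Printing Implicit Defensive.

Section BoundedRegular.

Variables (A : finType) (n : nat) (P : seq A -> Prop) (W : pred (seq A)).
Hypothesis PW : forall x, reflect (P x) (W x).
Hypothesis P_bounded : forall x, P x -> size x <= n.

Let bseq_step (q : option (n.-bseq A)) (a : A) : option (n.-bseq A) :=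
  obind (fun s : n.-bseq A => insub (rcons s a)) q.

Let foldl_bseq_step x : foldl bseq_step (insub [::]) x = insub x.
Proof.
elim/last_ind: x => [|x a IHx] //; rewrite foldl_rcons IHx /bseq_step.
case: insubP => [s _ <-|] /=; first by [].
by case: insubP => // s; rewrite size_rcons => /ltnW ->.
Qed.

Lemma bounded_dfa_regular : dfa_regular P.
Proof.
exists (option (n.-bseq A)), (insub [::]),
  (fun q : option (n.-bseq A) => if q is Some s then W s else false), bseq_step.
move=> x; rewrite foldl_bseq_step; apply: (iff_trans (rwP (PW x))).
case: insubP => [s _ <-|] /=; first by [].
by move=> /negP too_long; split=> // /PW /P_bounded /too_long.
Qed.

End BoundedRegular.

Section ActionLanguage.

Variables (S T : finType) (c : S).

Definition act_lang : lang S T := kat_lang (KAct T c).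

Definition act_code (x : seq (atom T + S)) : bool :=
  if x is [:: inl _; inr p; inl _] then p == c else false.

Lemma act_codeP x :
  reflect (exists w, act_lang w /\ genc w = x) (act_code x).
Proof.
apply: (iffP idP).
  case: x => [|[a|//] [|[//|p] [|[b|//] []]]] //= /eqP->.
  by exists (a, [:: (c, b)]); split; first exists b.
by move=> [[a l] [[b /= ->] <-]]; rewrite /= eqxx.
Qed.

Lemma act_lang_regular : guarded_regular act_lang.
Proof.
apply: (bounded_dfa_regular (n := 3) act_codeP) => x /act_codeP.
by case: x => [|[?|?] [|[?|?] [|[?|?] []]]].
Qed.

End ActionLanguage.

Definition connecting (S T : finType) (L : lang S T) : Prop :=
  forall a b : atom T, exists w, L w /\ gfirst w = a /\ glast w = b.

Lemma act_lang_connecting (S T : finType) (c : S) :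
  connecting (@act_lang S T c).
Proof. by move=> a b; exists (a, [:: (c, b)]); split; first exists b. Qed.

Section Substitution.

Variables (S0 S1 T : finType) (s : S0 -> lang S1 T).
Hypothesis s_connecting : forall p, connecting (s p).

Lemma subst_gs_exists a l : exists w, subst_gs s a l w.
Proof.
elim: l a => [|[p b] l IHl] a /=; first by exists (a, [::]).
have [w0 [s_w0 [first_w0 last_w0]]] := s_connecting p a b.
have [w1 subst_w1] := IHl b.
by exists (w0.1, w0.2 ++ w1.2), w0, w1.
Qed.

Lemma apply_s_inhabited (L : lang S0 T) :
  (exists w, apply_s s L w) <-> (exists v, L v).
Proof.
split=> [[w [v [Lv _]]] | [v Lv]]; first by exists v.
have [w subst_w] := subst_gs_exists v.1 v.2.
by exists w, v.
Qed.

End Substitution.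

Lemma O_e_inhabited_transfer n m (e : kexp 'I_n 'I_m) (S T : finType)
    (Ls Ls' : 'I_n -> lang S T) (bs : 'I_m -> bexp T) :
  (forall i, connecting (Ls i)) -> (forall i, connecting (Ls' i)) ->
  (exists w, O_e e Ls bs w) -> exists w, O_e e Ls' bs w.
Proof.
by move=> conn conn' /(apply_s_inhabited conn) /(apply_s_inhabited conn').
Qed.

Theorem lemma5p7 :
  ~ exists e : kexp 'I_2 'I_0,
      forall (S T : finType) (L1 L2 : lang S T),
        guarded_regular L1 -> guarded_regular L2 ->
        forall w : gstring S T,
          O_e e (fun i : 'I_2 => if i == ord0 then L1 else L2)
              (fun _ : 'I_0 => BTrue) w
          <-> (L1 w /\ L2 w).
Proof.
move=> [e O_e_meet].
pose Ls c (i : 'I_2) := if i == ord0 then @act_lang _ 'I_0 true else act_lang c.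
have Ls_connecting c i : connecting (Ls c i).
  by rewrite /Ls; case: (i == ord0); apply: act_lang_connecting.
have O_e_act c w :
    O_e e (Ls c) (fun=> BTrue) w <-> act_lang true w /\ act_lang c w.
  exact: O_e_meet (act_lang_regular _ _) (act_lang_regular _ _) w.
have [|w] := O_e_inhabited_transfer (e := e) (bs := fun=> BTrue)
  (Ls_connecting true) (Ls_connecting false).
  by exists (set0, [:: (true, set0)]); apply/O_e_act; split; exists set0.
by move=> /O_e_act[[b1 E1] [b2]]; rewrite E1.
Qed.
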